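(* Let $\Gamma$ be a context of the annotated system, $a$ an annotated term, $S$ an annotated type and $\theta\in\{\downarrow,?\}$. If $\Gamma\Vdash a:S\ \theta$ is derivable in the annotated type checking system, then $|\Gamma|\vdash |a| : |S|\ \theta$ is derivable in the (unannotated) $\mathsf{T}^{\mathsf{eq}\downarrow}$ type assignment system.
   Context: Unannotated $\mathsf{T}^{\mathsf{eq}\downarrow}$. Effects $\theta,\rho ::= \downarrow \mid ?$, ordered by $\theta\le\theta$ and $\downarrow\ \le\ ?$. Types $T ::= \mathsf{nat} \mid \Pi^{\theta} x{:}T.\,T' \mid t = t' \mid \mathsf{Terminates}\ t$. Terms $t ::= x \mid \lambda x.t \mid t\,t' \mid 0 \mid \mathsf{Suc}\,t \mid \mathsf{rec}\ f(x) = t \mid \mathsf{case}\ t\ t'\ t'' \mid \mathsf{join} \mid \mathsf{terminates} \mid \mathsf{contra} \mid \mathsf{abort}$. $[t'/x]$ is capture-avoiding substitution, $\mathrm{fv}$ free variables. Values $v ::= x \mid 0 \mid \mathsf{Suc}\,v \mid \lambda x.t \mid \mathsf{rec}\ f(x)=t \mid \mathsf{join}\mid\mathsf{terminates}\mid\mathsf{contra}$. Evaluation contexts $\mathcal{C} ::= [\,] \mid \mathsf{Suc}\,\mathcal{C} \mid \mathcal{C}\,t \mid v\,\mathcal{C} \mid \mathsf{case}\ \mathcal{C}\ t\ t'$. Reduction: $(\lambda x.t)\,v \leadsto_\beta [v/x]t$; $\mathsf{case}\ 0\ t\ t' \leadsto_\beta t$; $\mathsf{case}\ (\mathsf{Suc}\,v)\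 t\ t' \leadsto_\beta t'\,v$; $(\mathsf{rec}\ f(x)=t)\,v \leadsto_\beta [v/x][\mathsf{rec}\ f(x)=t/f]t$; $\mathcal{C}[t]\leadsto\mathcal{C}[t']$ if $t\leadsto_\beta t'$; $\mathcal{C}[\mathsf{abort}]\leadsto\mathsf{abort}$; $\leadsto^*$ reflexive–transitive closure, $\leadsto^N$ reduction in at most a fixed global bound $N$ of steps. Unannotated judgments ($\Gamma ::= \cdot\mid\Gamma,x{:}T$): $\cdot\vdash\mathsf{Ok}$; $\Gamma,x{:}T\vdash\mathsf{Ok}$ if $\Gamma\vdash\mathsf{Ok}$, $\Gamma\vdash T$. $\Gamma\vdash\mathsf{nat}$ if $\Gamma\vdash\mathsf{Ok}$; $\Gamma\vdash\Pi^\theta x{:}T.T'$ if $\Gamma,x{:}T\vdash T'$; $\Gamma\vdash t=t'$ if $\Gamma\vdash t:T\ ?$, $\Gamma\vdash t':T'\ ?$ for some $T,T'$; $\Gamma\vdash\mathsf{Terminates}\ t$ if $\Gamma\vdash t:T\ ?$ for some $T$. Rules for $\Gamma\vdash t:T\ \theta$ ($\theta$ arbitrary in conclusions unless stated): Var ($\Gamma(x)=T$, $\Gamma\vdash\mathsf{Ok}$ gives $x:T\ \theta$); Join ($t\leadsto^*t_0$, $t'\leadsto^*t_0$, $\Gamma\vdash t:T\ ?$, $\Gamma\vdash t':T'\ ?$ gives $\mathsf{join}:t=t'\ \theta$); Conv ($t:[t_2/x]T\ \theta$, $t':t_1=t_2\ \downarrow$, $\Gamma\vdash[t_1/x]T$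 gives $t:[t_1/x]T\ \theta$); Reflect ($t:T\ ?$, $t':\mathsf{Terminates}\ t\ \downarrow$ gives $t:T\ \theta$); Reify ($t:T\ \downarrow$ gives $\mathsf{terminates}:\mathsf{Terminates}\ t\ \theta$); CtxTerm ($t:\mathsf{Terminates}\ \mathcal{C}[t']\ \theta$ gives $t:\mathsf{Terminates}\ t'\ \theta$); Abs ($\Gamma,x{:}T'\vdash t:T\ \rho$, $\Gamma\vdash\Pi^\rho x{:}T'.T$ gives $\lambda x.t:\Pi^\rho x{:}T'.T\ \theta$); App ($t:\Pi^\rho x{:}T'.T\ \theta$, $t':T'\ \theta$, $\rho\le\theta$ gives $t\,t':[t'/x]T\ \theta$); Zero ($\Gamma\vdash\mathsf{Ok}$ gives $0:\mathsf{nat}\ \theta$); Suc ($t:\mathsf{nat}\ \theta$ gives $\mathsf{Suc}\,t:\mathsf{nat}\ \theta$); Rec ($\Gamma,f{:}\Pi^?x{:}T'.T,x{:}T'\vdash t:T\ ?$ gives $\mathsf{rec}\ f(x)=t:\Pi^?x{:}T'.T\ \theta$); RecNat ($p\notin\mathrm{fv}(t)$, $\Gamma,f{:}\Pi^?x{:}\mathsf{nat}.T,x{:}\mathsf{nat},p{:}\Pi^\downarrow x_1{:}\mathsf{nat}.\Pi^\downarrow p'{:}(x=\mathsf{Suc}\,x_1).\mathsf{Terminates}\ (f\,x_1)\vdash t:T\ \downarrow$ gives $\mathsf{rec}\ f(x)=t:\Pi^\downarrow x{:}\mathsf{nat}.T\ \theta$); Case ($t:\mathsf{nat}\ \theta$,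 $t':[0/x]T\ \theta$, $t'':\Pi^\rho x'{:}\mathsf{nat}.[\mathsf{Suc}\,x'/x]T\ \theta$, $\rho\le\theta$ gives $\mathsf{case}\ t\ t'\ t'':[t/x]T\ \theta$); Contra ($t:0=\mathsf{Suc}\,t'\ \downarrow$ gives $\mathsf{contra}:T\ \theta$); Abort ($\Gamma\vdash\mathsf{Ok}$ gives $\mathsf{abort}:T\ ?$). Annotated system. Types $S ::= \mathsf{nat}\mid\Pi^\theta x{:}S.S'\mid a=a'\mid\mathsf{Terminates}\ a$. Terms $a ::= x\mid a\,a'\mid\lambda^\theta x{:}S.a\mid 0\mid\mathsf{Suc}\,a\mid\mathsf{rec}_{\mathsf{nat}}\ f(x\ p):S=a\mid\mathsf{rec}\ f(x{:}S):S'=a\mid\mathsf{case}\ x.S\ a\ a'\ a''\mid\mathsf{join}\ a\ a'\mid\mathsf{conv}\ x.S\ a\ a'\mid\mathsf{terminates}\ a\mid\mathsf{reflect}\ a\ a'\mid\mathsf{inv}\ a\ a'\mid\mathsf{contra}\ S\ a\mid\mathsf{abort}\ S$. Erasure $|\cdot|$: homomorphic on types ($|\Pi^\theta x{:}S.S'|=\Pi^\theta x{:}|S|.|S'|$, etc.) and on $x$, application, $0$, $\mathsf{Suc}$; $|\lambda^\theta x{:}S.a|=\lambda x.|a|$; $|\mathsf{case}\ x.S\ a\ a'\ a''|=\mathsf{case}\ |a|\ |a'|\ |a''|$; both recursion forms erase to $\mathsf{rec}\ f(x)=|a|$; $|\mathsf{join}\ a\ a'|=\mathsf{join}$, $|\mathsf{terminates}\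 a|=\mathsf{terminates}$, $|\mathsf{contra}\ S\ a|=\mathsf{contra}$, $|\mathsf{abort}\ S|=\mathsf{abort}$; $|\mathsf{conv}\ x.S\ a\ a'|=|\mathsf{reflect}\ a\ a'|=|\mathsf{inv}\ a\ a'|=|a|$. Contexts $\Gamma ::= \cdot\mid\Gamma,x{:}S$, erased pointwise. Annotated judgments: $\cdot\Vdash\mathsf{Ok}$; $\Gamma,x{:}S\Vdash\mathsf{Ok}$ if $\Gamma\Vdash\mathsf{Ok}$, $\Gamma\Vdash S$. $\Gamma\Vdash\mathsf{nat}$ if $\Gamma\Vdash\mathsf{Ok}$; $\Gamma\Vdash\Pi^\theta x{:}S.S'$ if $\Gamma\Vdash S$ and $\Gamma,x{:}S\Vdash S'$; $\Gamma\Vdash a=a'$ if $\Gamma\Vdash a:S\ ?$, $\Gamma\Vdash a':S'\ ?$, $\Gamma\Vdash S$, $\Gamma\Vdash S'$; $\Gamma\Vdash\mathsf{Terminates}\ a$ if $\Gamma\Vdash a:S\ ?$. Rules for $\Gamma\Vdash a:S\ \theta$ ($\theta$ arbitrary in conclusions unless stated): A_Var ($\Gamma(x)=S$, $\Gamma\Vdash\mathsf{Ok}$ gives $x:S\ \theta$); A_Join ($|a|\leadsto^N t$, $|a'|\leadsto^N t$, $a:S\ ?$, $a':S'\ ?$ gives $\mathsf{join}\ a\ a':a=a'\ \theta$); A_Conv ($a:[a_2/x]S\ \theta$, $a':a_1=a_2\ \downarrow$, $\Gamma\Vdash[a_1/x]S$ gives $\mathsf{conv}\ x.S\ a\ a':[a_1/x]S\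 \theta$); A_Reflect ($a:S\ ?$, $a':\mathsf{Terminates}\ a\ \downarrow$ gives $\mathsf{reflect}\ a\ a':S\ \theta$); A_Reify ($a:S\ \downarrow$ gives $\mathsf{terminates}\ a:\mathsf{Terminates}\ a\ \theta$); A_CtxTerm ($a:\mathsf{Terminates}\ a''\ \theta$ and $|a''|=\mathcal{C}[|a'|]$ for some evaluation context $\mathcal{C}$ gives $\mathsf{inv}\ a\ a':\mathsf{Terminates}\ a'\ \theta$); A_Abs ($\Gamma,x{:}S'\Vdash a:S\ \rho$, $\Gamma\Vdash\Pi^\rho x{:}S'.S$ gives $\lambda^\rho x{:}S'.a:\Pi^\rho x{:}S'.S\ \theta$); A_App ($a:\Pi^\rho x{:}S'.S\ \theta$, $a':S'\ \theta$, $\rho\le\theta$ gives $a\,a':[a'/x]S\ \theta$); A_Zero ($\Gamma\Vdash\mathsf{Ok}$ gives $0:\mathsf{nat}\ \theta$); A_Suc; A_Rec ($\Gamma,f{:}\Pi^?x{:}S'.S,x{:}S'\Vdash a:S\ ?$ gives $\mathsf{rec}\ f(x{:}S'):S=a:\Pi^?x{:}S'.S\ \theta$); A_RecNat ($p\notin\mathrm{fv}(a)$, $\Gamma,f{:}\Pi^?x{:}\mathsf{nat}.S,x{:}\mathsf{nat},p{:}\Pi^\downarrow x_1{:}\mathsf{nat}.\Pi^\downarrow p'{:}(x=\mathsf{Suc}\,x_1).\mathsf{Terminates}\ (f\,x_1)\Vdash a:S\ \downarrow$ gives $\mathsf{rec}_{\mathsf{nat}}\ f(x\ p):S=a:\Pi^\downarrow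 x{:}\mathsf{nat}.S\ \theta$); A_Case ($a:\mathsf{nat}\ \theta$, $a':[0/x]S\ \theta$, $a'':\Pi^\rho x'{:}\mathsf{nat}.[\mathsf{Suc}\,x'/x]S\ \theta$, $\rho\le\theta$ gives $\mathsf{case}\ x.S\ a\ a'\ a'':[a/x]S\ \theta$); A_Contra ($a:0=\mathsf{Suc}\,a'\ \downarrow$ gives $\mathsf{contra}\ S\ a:S\ \theta$); A_Abort ($\Gamma\Vdash\mathsf{Ok}$ gives $\mathsf{abort}\ S:S\ ?$). *)

(* Locally nameless is avoided: all binders are de Bruijn
   indices (index 0 = most recently bound variable); contexts are lists whose
   head is the most recently added binding. *)
From Stdlib Require Import List Arith.
Import ListNotations.

Inductive eff : Type := Down | Quest .

Inductive eff_le : eff -> eff -> Prop :=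
| eff_le_refl : forall th, eff_le th th
| eff_le_dq : eff_le Down Quest.

Definition up_ren (r : nat -> nat) : nat -> nat :=
  fun n => match n with 0 => 0 | S k => S (r k) end.

Inductive tm : Type :=
| var (x : nat)
| lam (t : tm)
| app (t t' : tm)
| zero
| suc (t : tm)
| rec (t : tm)                 (* rec f(x) = t ; binds f then x: x = 0, f = 1 *)
| case (t t' t'' : tm)
| join
| terminates
| contra
| abort.

Inductive ty : Type :=
| Tnat
| TPi (th : eff) (T : ty) (T' : ty)
| TEq (t t' : tm)
| TTerm (t : tm).

Fixpoint ren_tm (r : nat -> nat) (t : tm) : tm :=
  match t with
  | var x => var (r x)
  | lam t => lam (ren_tm (up_ren r) t)
  | app t1 t2 => app (ren_tm r t1) (ren_tm r t2)
  | zero => zero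
  | suc t => suc (ren_tm r t)
  | rec t => rec (ren_tm (up_ren (up_ren r)) t)
  | case t1 t2 t3 => case (ren_tm r t1) (ren_tm r t2) (ren_tm r t3)
  | join => join
  | terminates => terminates
  | contra => contra
  | abort => abort
  end.

Definition up_sub (s : nat -> tm) : nat -> tm :=
  fun n => match n with 0 => var 0 | S k => ren_tm S (s k) end.

Fixpoint subst_tm (s : nat -> tm) (t : tm) : tm :=
  match t with
  | var x => s x
  | lam t => lam (subst_tm (up_sub s) t)
  | app t1 t2 => app (subst_tm s t1) (subst_tm s t2)
  | zero => zero
  | suc t => suc (subst_tm s t)
  | rec t => rec (subst_tm (up_sub (up_sub s)) t)
  | case t1 t2 t3 => case (subst_tm s t1) (subst_tm s t2) (subst_tm s t3)
  | join => join
  | terminates => terminates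
  | contra => contra
  | abort => abort
  end.

Fixpoint ren_ty (r : nat -> nat) (T : ty) : ty :=
  match T with
  | Tnat => Tnat
  | TPi th T1 T2 => TPi th (ren_ty r T1) (ren_ty (up_ren r) T2)
  | TEq t1 t2 => TEq (ren_tm r t1) (ren_tm r t2)
  | TTerm t => TTerm (ren_tm r t)
  end.

Fixpoint subst_ty (s : nat -> tm) (T : ty) : ty :=
  match T with
  | Tnat => Tnat
  | TPi th T1 T2 => TPi th (subst_ty s T1) (subst_ty (up_sub s) T2)
  | TEq t1 t2 => TEq (subst_tm s t1) (subst_tm s t2)
  | TTerm t => TTerm (subst_tm s t)
  end.

Definition sub1 (u : tm) : nat -> tm :=
  fun n => match n with 0 => u | S k => var k end.

Definition sub_suc : nat -> tm :=
  fun n => match n with 0 => suc (var 0) | S k => var (S k) end.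

(* [v/x][rec f(x)=t / f] : x = 0, f = 1 *)
Definition sub_rec (v body : tm) : nat -> tm :=
  fun n => match n with 0 => v | 1 => rec body | S (S k) => var k end.

Inductive value : tm -> Prop :=
| v_var : forall x, value (var x)
| v_zero : value zero
| v_suc : forall v, value v -> value (suc v)
| v_lam : forall t, value (lam t)
| v_rec : forall t, value (rec t)
| v_join : value join
| v_terminates : value terminates
| v_contra : value contra.

Inductive ectx : Type :=
| EHole
| ESuc (C : ectx)
| EAppL (C : ectx) (t : tm)
| EAppR (v : tm) (C : ectx)
| ECase (C : ectx) (t t' : tm).

Fixpoint ectx_wf (C : ectx) : Prop :=
  match C with
  | EHole => True
  | ESuc C => ectx_wf C
  | EAppL C _ => ectx_wf C
  | EAppR v C => value v /\ ectx_wf C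
  | ECase C _ _ => ectx_wf C
  end.

Fixpoint plug (C : ectx) (t : tm) : tm :=
  match C with
  | EHole => t
  | ESuc C => suc (plug C t)
  | EAppL C t' => app (plug C t) t'
  | EAppR v C => app v (plug C t)
  | ECase C t1 t2 => case (plug C t) t1 t2
  end.

Inductive beta : tm -> tm -> Prop :=
| beta_lam : forall t v, value v -> beta (app (lam t) v) (subst_tm (sub1 v) t)
| beta_case0 : forall t t', beta (case zero t t') t
| beta_caseS : forall v t t', value v -> beta (case (suc v) t t') (app t' v)
| beta_rec : forall t v, value v ->
    beta (app (rec t) v) (subst_tm (sub_rec v t) t).

Inductive step : tm -> tm -> Prop :=
| step_ctx : forall C t t', ectx_wf C -> beta t t' -> step (plug C t) (plug C t')
| step_abort : forall C, ectx_wf C -> step (plug C abort) abort.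

Inductive steps : tm -> tm -> Prop :=
| steps_refl : forall t, steps t t
| steps_step : forall t t' t'', step t t' -> steps t' t'' -> steps t t''.

Inductive nsteps : nat -> tm -> tm -> Prop :=
| nsteps_0 : forall t, nsteps 0 t t
| nsteps_S : forall k t t' t'', step t t' -> nsteps k t' t'' -> nsteps (S k) t t''.

Definition steps_le (N : nat) (t t' : tm) : Prop :=
  exists k, k <= N /\ nsteps k t t'.

Definition ctx := list ty.

(* type of p in  Γ, f, x, p : p : Π^↓ x1:nat. Π^↓ p':(x = Suc x1). Terminates (f x1)
   (stated in context Γ,f,x : x = 0, f = 1) *)
Definition recnat_p_ty : ty :=
  TPi Down Tnat (TPi Down (TEq (var 1) (suc (var 0))) (TTerm (app (var 3) (var 1)))).

(* renaming from context Γ,x to context Γ,f,x,p *)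
Definition ren_recnat : nat -> nat :=
  fun n => match n with 0 => 1 | S k => S (S (S k)) end.

Inductive ok : ctx -> Prop :=
| ok_nil : ok []
| ok_cons : forall G T, ok G -> wf G T -> ok (T :: G)

with wf : ctx -> ty -> Prop :=
| wf_nat : forall G, ok G -> wf G Tnat
| wf_pi : forall G th T T', wf (T :: G) T' -> wf G (TPi th T T')
| wf_eq : forall G t t' T T', typing G t T Quest -> typing G t' T' Quest ->
    wf G (TEq t t')
| wf_term : forall G t T, typing G t T Quest -> wf G (TTerm t)

with typing : ctx -> tm -> ty -> eff -> Prop :=
| T_Var : forall G x T th, ok G -> nth_error G x = Some T ->
    typing G (var x) (ren_ty (Nat.add (S x)) T) th
| T_Join : forall G t t' t0 T T' th, steps t t0 -> steps t' t0 ->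
    typing G t T Quest -> typing G t' T' Quest ->
    typing G join (TEq t t') th
| T_Conv : forall G t t' t1 t2 T th,
    typing G t (subst_ty (sub1 t2) T) th -> typing G t' (TEq t1 t2) Down ->
    wf G (subst_ty (sub1 t1) T) ->
    typing G t (subst_ty (sub1 t1) T) th
| T_Reflect : forall G t t' T th, typing G t T Quest ->
    typing G t' (TTerm t) Down -> typing G t T th
| T_Reify : forall G t T th, typing G t T Down ->
    typing G terminates (TTerm t) th
| T_CtxTerm : forall G t C t' th, ectx_wf C ->
    typing G t (TTerm (plug C t')) th -> typing G t (TTerm t') th
| T_Abs : forall G t T T' rho th, typing (T' :: G) t T rho ->
    wf G (TPi rho T' T) -> typing G (lam t) (TPi rho T' T) th
| T_App : forall G t t' T T' rho th, typing G t (TPi rho T' T) th ->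
    typing G t' T' th -> eff_le rho th ->
    typing G (app t t') (subst_ty (sub1 t') T) th
| T_Zero : forall G th, ok G -> typing G zero Tnat th
| T_Suc : forall G t th, typing G t Tnat th -> typing G (suc t) Tnat th
| T_Rec : forall G t T T' th,
    typing (ren_ty S T' :: TPi Quest T' T :: G) t (ren_ty (up_ren S) T) Quest ->
    typing G (rec t) (TPi Quest T' T) th
| T_RecNat : forall G t T th,
    typing (recnat_p_ty :: Tnat :: TPi Quest Tnat T :: G) (ren_tm S t)
      (ren_ty ren_recnat T) Down ->
    typing G (rec t) (TPi Down Tnat T) th
| T_Case : forall G t t' t'' T rho th, typing G t Tnat th ->
    typing G t' (subst_ty (sub1 zero) T) th ->
    typing G t'' (TPi rho Tnat (subst_ty sub_suc T)) th -> eff_le rho th ->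
    typing G (case t t' t'') (subst_ty (sub1 t) T) th
| T_Contra : forall G t t' T th, typing G t (TEq zero (suc t')) Down ->
    typing G contra T th
| T_Abort : forall G T, ok G -> typing G abort T Quest.

Inductive aty : Type :=
| ANat
| APi (th : eff) (S : aty) (S' : aty)
| AEq (a a' : atm)
| ATerm (a : atm)
with atm : Type :=
| avar (x : nat)
| aapp (a a' : atm)
| alam (th : eff) (S : aty) (a : atm)
| azero
| asuc (a : atm)
| arecnat (S : aty) (a : atm)
    (* rec_nat f(x p):S = a ; S binds x (1 binder); a binds f, x (x = 0, f = 1);
       p is not represented since p ∉ fv(a) is required *)
| arec (S' : aty) (S : aty) (a : atm)
    (* rec f(x:S'):S = a ; S binds x; a binds f, x (x = 0, f = 1) *)
| acase (S : aty) (a a' a'' : atm)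
| ajoin (a a' : atm)
| aconv (S : aty) (a a' : atm)
| aterminates (a : atm)
| areflect (a a' : atm)
| ainv (a a' : atm)
| acontra (S : aty) (a : atm)
| aabort (S : aty).

Fixpoint ren_aty (r : nat -> nat) (S0 : aty) {struct S0} : aty :=
  match S0 with
  | ANat => ANat
  | APi th S1 S2 => APi th (ren_aty r S1) (ren_aty (up_ren r) S2)
  | AEq a1 a2 => AEq (ren_atm r a1) (ren_atm r a2)
  | ATerm a => ATerm (ren_atm r a)
  end
with ren_atm (r : nat -> nat) (a0 : atm) {struct a0} : atm :=
  match a0 with
  | avar x => avar (r x)
  | aapp a1 a2 => aapp (ren_atm r a1) (ren_atm r a2)
  | alam th S1 a => alam th (ren_aty r S1) (ren_atm (up_ren r) a)
  | azero => azero
  | asuc a => asuc (ren_atm r a)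
  | arecnat S1 a => arecnat (ren_aty (up_ren r) S1) (ren_atm (up_ren (up_ren r)) a)
  | arec S1 S2 a => arec (ren_aty r S1) (ren_aty (up_ren r) S2)
                         (ren_atm (up_ren (up_ren r)) a)
  | acase S1 a1 a2 a3 => acase (ren_aty (up_ren r) S1) (ren_atm r a1)
                               (ren_atm r a2) (ren_atm r a3)
  | ajoin a1 a2 => ajoin (ren_atm r a1) (ren_atm r a2)
  | aconv S1 a1 a2 => aconv (ren_aty (up_ren r) S1) (ren_atm r a1) (ren_atm r a2)
  | aterminates a => aterminates (ren_atm r a)
  | areflect a1 a2 => areflect (ren_atm r a1) (ren_atm r a2)
  | ainv a1 a2 => ainv (ren_atm r a1) (ren_atm r a2)
  | acontra S1 a => acontra (ren_aty r S1) (ren_atm r a)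
  | aabort S1 => aabort (ren_aty r S1)
  end.

Definition up_asub (s : nat -> atm) : nat -> atm :=
  fun n => match n with 0 => avar 0 | S k => ren_atm S (s k) end.

Fixpoint subst_aty (s : nat -> atm) (S0 : aty) {struct S0} : aty :=
  match S0 with
  | ANat => ANat
  | APi th S1 S2 => APi th (subst_aty s S1) (subst_aty (up_asub s) S2)
  | AEq a1 a2 => AEq (subst_atm s a1) (subst_atm s a2)
  | ATerm a => ATerm (subst_atm s a)
  end
with subst_atm (s : nat -> atm) (a0 : atm) {struct a0} : atm :=
  match a0 with
  | avar x => s x
  | aapp a1 a2 => aapp (subst_atm s a1) (subst_atm s a2)
  | alam th S1 a => alam th (subst_aty s S1) (subst_atm (up_asub s) a)
  | azero => azero
  | asuc a => asuc (subst_atm s a)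
  | arecnat S1 a => arecnat (subst_aty (up_asub s) S1)
                            (subst_atm (up_asub (up_asub s)) a)
  | arec S1 S2 a => arec (subst_aty s S1) (subst_aty (up_asub s) S2)
                         (subst_atm (up_asub (up_asub s)) a)
  | acase S1 a1 a2 a3 => acase (subst_aty (up_asub s) S1) (subst_atm s a1)
                               (subst_atm s a2) (subst_atm s a3)
  | ajoin a1 a2 => ajoin (subst_atm s a1) (subst_atm s a2)
  | aconv S1 a1 a2 => aconv (subst_aty (up_asub s) S1) (subst_atm s a1)
                            (subst_atm s a2)
  | aterminates a => aterminates (subst_atm s a)
  | areflect a1 a2 => areflect (subst_atm s a1) (subst_atm s a2)
  | ainv a1 a2 => ainv (subst_atm s a1) (subst_atm s a2)
  | acontra S1 a => acontra (subst_aty s S1) (subst_atm s a)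
  | aabort S1 => aabort (subst_aty s S1)
  end.

Definition asub1 (u : atm) : nat -> atm :=
  fun n => match n with 0 => u | S k => avar k end.

Definition asub_suc : nat -> atm :=
  fun n => match n with 0 => asuc (avar 0) | S k => avar (S k) end.

Fixpoint er_ty (S0 : aty) {struct S0} : ty :=
  match S0 with
  | ANat => Tnat
  | APi th S1 S2 => TPi th (er_ty S1) (er_ty S2)
  | AEq a1 a2 => TEq (er_tm a1) (er_tm a2)
  | ATerm a => TTerm (er_tm a)
  end
with er_tm (a0 : atm) {struct a0} : tm :=
  match a0 with
  | avar x => var x
  | aapp a1 a2 => app (er_tm a1) (er_tm a2)
  | alam _ _ a => lam (er_tm a)
  | azero => zero
  | asuc a => suc (er_tm a)
  | arecnat _ a => rec (er_tm a)
  | arec _ _ a => rec (er_tm a)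
  | acase _ a1 a2 a3 => case (er_tm a1) (er_tm a2) (er_tm a3)
  | ajoin _ _ => join
  | aconv _ a _ => er_tm a
  | aterminates _ => terminates
  | areflect a _ => er_tm a
  | ainv a _ => er_tm a
  | acontra _ _ => contra
  | aabort _ => abort
  end.

Definition er_ctx (G : list aty) : ctx := map er_ty G.

Definition actx := list aty.

Definition arecnat_p_ty : aty :=
  APi Down ANat (APi Down (AEq (avar 1) (asuc (avar 0))) (ATerm (aapp (avar 3) (avar 1)))).

Inductive aok (N : nat) : actx -> Prop :=
| aok_nil : aok N []
| aok_cons : forall G S0, aok N G -> awf N G S0 -> aok N (S0 :: G)

with awf (N : nat) : actx -> aty -> Prop :=
| awf_nat : forall G, aok N G -> awf N G ANat
| awf_pi : forall G th S1 S2, awf N G S1 -> awf N (S1 :: G) S2 ->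
    awf N G (APi th S1 S2)
| awf_eq : forall G a a' S1 S2, atyping N G a S1 Quest -> atyping N G a' S2 Quest ->
    awf N G S1 -> awf N G S2 -> awf N G (AEq a a')
| awf_term : forall G a S1, atyping N G a S1 Quest -> awf N G (ATerm a)

with atyping (N : nat) : actx -> atm -> aty -> eff -> Prop :=
| A_Var : forall G x S0 th, aok N G -> nth_error G x = Some S0 ->
    atyping N G (avar x) (ren_aty (Nat.add (S x)) S0) th
| A_Join : forall G a a' t S1 S2 th,
    steps_le N (er_tm a) t -> steps_le N (er_tm a') t ->
    atyping N G a S1 Quest -> atyping N G a' S2 Quest ->
    atyping N G (ajoin a a') (AEq a a') th
| A_Conv : forall G a a' a1 a2 S0 th,
    atyping N G a (subst_aty (asub1 a2) S0) th ->
    atyping N G a' (AEq a1 a2) Down ->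
    awf N G (subst_aty (asub1 a1) S0) ->
    atyping N G (aconv S0 a a') (subst_aty (asub1 a1) S0) th
| A_Reflect : forall G a a' S0 th, atyping N G a S0 Quest ->
    atyping N G a' (ATerm a) Down -> atyping N G (areflect a a') S0 th
| A_Reify : forall G a S0 th, atyping N G a S0 Down ->
    atyping N G (aterminates a) (ATerm a) th
| A_CtxTerm : forall G a a' a'' C th, atyping N G a (ATerm a'') th ->
    ectx_wf C -> er_tm a'' = plug C (er_tm a') ->
    atyping N G (ainv a a') (ATerm a') th
| A_Abs : forall G a S0 S' rho th, atyping N (S' :: G) a S0 rho ->
    awf N G (APi rho S' S0) -> atyping N G (alam rho S' a) (APi rho S' S0) th
| A_App : forall G a a' S0 S' rho th, atyping N G a (APi rho S' S0) th ->
    atyping N G a' S' th -> eff_le rho th ->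
    atyping N G (aapp a a') (subst_aty (asub1 a') S0) th
| A_Zero : forall G th, aok N G -> atyping N G azero ANat th
| A_Suc : forall G a th, atyping N G a ANat th -> atyping N G (asuc a) ANat th
| A_Rec : forall G a S0 S' th,
    atyping N (ren_aty S S' :: APi Quest S' S0 :: G) a (ren_aty (up_ren S) S0) Quest ->
    atyping N G (arec S' S0 a) (APi Quest S' S0) th
| A_RecNat : forall G a S0 th,
    atyping N (arecnat_p_ty :: ANat :: APi Quest ANat S0 :: G) (ren_atm S a)
      (ren_aty ren_recnat S0) Down ->
    atyping N G (arecnat S0 a) (APi Down ANat S0) th
| A_Case : forall G a a' a'' S0 rho th, atyping N G a ANat th ->
    atyping N G a' (subst_aty (asub1 azero) S0) th ->
    atyping N G a'' (APi rho ANat (subst_aty asub_suc S0)) th -> eff_le rho th ->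
    atyping N G (acase S0 a a' a'') (subst_aty (asub1 a) S0) th
| A_Contra : forall G a a' S0 th, atyping N G a (AEq azero (asuc a')) Down ->
    atyping N G (acontra S0 a) S0 th
| A_Abort : forall G S0, aok N G -> atyping N G (aabort S0) S0 Quest.

(* Erasure is a homomorphism that commutes with renaming and substitution, so
   every annotated rule erases to an instance of the corresponding unannotated
   rule: conv, reflect and inv erase to their principal subterm, which already
   has the required type by Conv, Reflect and CtxTerm, and a bounded reduction
   [|a| ~>^N t] is in particular a reduction [|a| ~>* t]. *)
From Stdlib Require Import List.

Scheme aty_ind' := Induction for aty Sort Prop
with atm_ind' := Induction for atm Sort Prop.
Combined Scheme aty_atm_ind from aty_ind', atm_ind'.

Lemma er_ren :
  (forall S0 r, er_ty (ren_aty r S0) = ren_ty r (er_ty S0)) /\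
  (forall a r, er_tm (ren_atm r a) = ren_tm r (er_tm a)).
Proof.
  apply aty_atm_ind; intros; simpl; congruence.
Qed.

Lemma er_up_asub (s : nat -> atm) (s' : nat -> tm) :
  (forall n, er_tm (s n) = s' n) ->
  forall n, er_tm (up_asub s n) = up_sub s' n.
Proof.
  intros Hs [|n]; simpl; [reflexivity|].
  now rewrite (proj2 er_ren), Hs.
Qed.

Lemma er_subst :
  (forall S0 s s', (forall n, er_tm (s n) = s' n) ->
     er_ty (subst_aty s S0) = subst_ty s' (er_ty S0)) /\
  (forall a s s', (forall n, er_tm (s n) = s' n) ->
     er_tm (subst_atm s a) = subst_tm s' (er_tm a)).
Proof.
  apply aty_atm_ind; intros; simpl;
    repeat match goal with
    | IH : forall s s', _ -> _ = _ |- _ =>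
        first [ rewrite (IH _ _ (er_up_asub _ _ (er_up_asub _ _ ltac:(eassumption))))
              | rewrite (IH _ _ (er_up_asub _ _ ltac:(eassumption)))
              | rewrite (IH _ _ ltac:(eassumption)) ]; clear IH
    end; auto.
Qed.

Lemma er_ty_subst1 (a : atm) (S0 : aty) :
  er_ty (subst_aty (asub1 a) S0) = subst_ty (sub1 (er_tm a)) (er_ty S0).
Proof.
  apply (proj1 er_subst). now intros [|n].
Qed.

Lemma er_ty_subst_suc (S0 : aty) :
  er_ty (subst_aty asub_suc S0) = subst_ty sub_suc (er_ty S0).
Proof.
  apply (proj1 er_subst). now intros [|n].
Qed.

Lemma nsteps_steps (k : nat) (t t' : tm) : nsteps k t t' -> steps t t'.
Proof.
  induction 1; econstructor; eassumption.
Qed.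

Lemma steps_le_steps (N : nat) (t t' : tm) : steps_le N t t' -> steps t t'.
Proof.
  intros [k [_ Hk]]. exact (nsteps_steps k t t' Hk).
Qed.

Lemma nth_error_er_ctx (G : actx) (x : nat) (S0 : aty) :
  nth_error G x = Some S0 -> nth_error (er_ctx G) x = Some (er_ty S0).
Proof.
  intros Hx. unfold er_ctx. now rewrite nth_error_map, Hx.
Qed.

Scheme aok_ind' := Induction for aok Sort Prop
with awf_ind' := Induction for awf Sort Prop
with atyping_ind' := Induction for atyping Sort Prop.
Combined Scheme annotated_ind from aok_ind', awf_ind', atyping_ind'.

Lemma erasure_sound (N : nat) :
  (forall G, aok N G -> ok (er_ctx G)) /\
  (forall G S0, awf N G S0 -> wf (er_ctx G) (er_ty S0)) /\
  (forall G a S0 th, atyping N G a S0 th ->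
     typing (er_ctx G) (er_tm a) (er_ty S0) th).
Proof.
  apply annotated_ind; intros; cbn [er_ctx map er_ty er_tm] in *.
  - constructor.
  - now constructor.
  - now constructor.
  - now constructor.
  - eapply wf_eq; eassumption.
  - eapply wf_term; eassumption.
  - rewrite (proj1 er_ren). now apply T_Var, nth_error_er_ctx.
  - eapply T_Join; eauto using steps_le_steps.
  - rewrite er_ty_subst1 in *. eapply T_Conv; eassumption.
  - eapply T_Reflect; eassumption.
  - eapply T_Reify; eassumption.
  - eapply T_CtxTerm; [eassumption|congruence].
  - now apply T_Abs.
  - rewrite er_ty_subst1. eapply T_App; eassumption.
  - now apply T_Zero.
  - now apply T_Suc.
  - rewrite !(proj1 er_ren) in *. now apply T_Rec.
  - rewrite (proj1 er_ren), (proj2 er_ren) in *. now apply T_RecNat.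
  - rewrite er_ty_subst1, er_ty_subst_suc in *. eapply T_Case; eassumption.
  - eapply T_Contra; eassumption.
  - now apply T_Abort.
Qed.

Theorem proposition1 :
  forall (N : nat) (G : actx) (a : atm) (S0 : aty) (th : eff),
    atyping N G a S0 th ->
    typing (er_ctx G) (er_tm a) (er_ty S0) th.
Proof.
  intros N. apply (erasure_sound N).
Qed.
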